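(* For every integers $d \geq 2$ and $s,t \geq 1$, we have $$\tfrac{s}{s+t}\mathsf U_{d,s}+\tfrac{t}{s+t}\mathsf U_{d,t}\subseteq \mathsf U_{d,s+t},$$ i.e. for all $B\in\mathsf U_{d,s}$, $C\in\mathsf U_{d,t}$, the matrix $\tfrac{s}{s+t}B+\tfrac{t}{s+t}C$ belongs to $\mathsf U_{d,s+t}$.
   Context: For integers $d\ge 2$, $s\ge 1$, a matrix $U\in\mathcal U(ds)$ (unitary $ds\times ds$ complex matrices) is viewed as a $d\times d$ block matrix with blocks $U_{ij}\in M_s(\mathbb C)$. Define $\phi_{d,s}(U)=\big(\tfrac1s\|U_{ij}\|_F^2\big)_{i,j=1}^d$, where $\|X\|_F=\operatorname{Tr}(XX^* )^{1/2}$, and $\mathsf U_{d,s}:=\phi_{d,s}(\mathcal U(ds))$. *)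

From HB Require Import structures.
From mathcomp Require Import all_boot all_order all_algebra.
From mathcomp Require Import complex.
From mathcomp Require Import reals.
Set Implicit Arguments. Unset Strict Implicit. Unset Printing Implicit Defensive.
Import Order.TTheory GRing.Theory Num.Theory.
Local Open Scope ring_scope.

Definition adjmx (R : realType) (n : nat) (U : 'M[R[i]]_n) : 'M[R[i]]_n :=
  (map_mx (fun z => z^*) U)^T.

Definition unitary_mx (R : realType) (n : nat) (U : 'M[R[i]]_n) : Prop :=
  U *m adjmx U = 1%:M.

(* phi_{d,s}(U)_{ij} = (1/s) ||U_{ij}||_F^2, where U_{ij} is the (i,j) s x s block,
   whose (a,b) entry is U (i*s+a) (j*s+b) = U (mxvec_index i a) (mxvec_index j b). *)
Definition phi_ds (R : realType) (d s : nat) (U : 'M[R[i]]_(d * s)) : 'M[R[i]]_d :=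
  \matrix_(i < d, j < d)
    (s%:R^-1 * \sum_(a < s) \sum_(b < s)
        `|U (mxvec_index i a) (mxvec_index j b)| ^+ 2).

Definition Uset (R : realType) (d s : nat) (B : 'M[R[i]]_d) : Prop :=
  exists U : 'M[R[i]]_(d * s), unitary_mx U /\ phi_ds U = B.

From HB Require Import structures.
From mathcomp Require Import all_boot all_order all_algebra.
From mathcomp Require Import complex.
From mathcomp Require Import reals.
Import Order.TTheory GRing.Theory Num.Theory.
Local Open Scope ring_scope.

(* Given unitaries U in U(ds) and V in U(dt), the block diagonal matrix
   diag(U, V) is unitary, and so is any simultaneous permutation of its rows
   and columns.  Reindexing {1..d} x {1..s+t} so that the (i, j) block of size
   s+t becomes diag(U_ij, V_ij) gives W in U(d(s+t)) with
   ||W_ij||^2 = ||U_ij||^2 + ||V_ij||^2, i.e.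
   (s+t) phi(W) = s phi(U) + t phi(V). *)

Definition mxvec_unindex {m n} (k : 'I_(m * n)) : 'I_m * 'I_n :=
  enum_val (cast_ord (esym (mxvec_cast m n)) k).

Lemma mxvec_indexK m n (i : 'I_m) (j : 'I_n) :
  mxvec_unindex (mxvec_index i j) = (i, j).
Proof. by rewrite /mxvec_unindex /mxvec_index cast_ordK enum_rankK. Qed.

Section Unitary.
Variable R : realType.

Lemma adjmx_block_diag n1 n2 (U : 'M[R[i]]_n1) (V : 'M[R[i]]_n2) :
  adjmx (block_mx U 0 0 V) = block_mx (adjmx U) 0 0 (adjmx V).
Proof.
rewrite /adjmx map_block_mx tr_block_mx; congr block_mx;
  by apply/matrixP => k l; rewrite !mxE conjC0.
Qed.

Lemma unitary_block_diag n1 n2 (U : 'M[R[i]]_n1) (V : 'M[R[i]]_n2) :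
  unitary_mx U -> unitary_mx V -> unitary_mx (block_mx U 0 0 V).
Proof.
move=> hU hV; rewrite /unitary_mx adjmx_block_diag mulmx_block.
by rewrite !mulmx0 !mul0mx !addr0 !add0r hU hV [RHS]scalar_mx_block.
Qed.

Lemma unitary_mxsub m n (f : 'I_n -> 'I_m) (A : 'M[R[i]]_m) :
  bijective f -> unitary_mx A -> unitary_mx (mxsub f f A).
Proof.
move=> f_bij hA; apply/matrixP => k l.
have /matrixP/(_ (f k) (f l)) := hA.
rewrite !mxE (reindex _ (onW_bij _ f_bij)) (inj_eq (bij_inj f_bij)) => <-.
by apply: eq_bigr => j _; rewrite !mxE.
Qed.

End Unitary.

Section Interleave.
Variables d s t : nat.

Definition interleave_index (k : 'I_(d * (s + t))) : 'I_(d * s + d * t) :=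
  let: (i, a) := mxvec_unindex k in
  match split a with
  | inl b => lshift (d * t) (mxvec_index i b)
  | inr c => rshift (d * s) (mxvec_index i c)
  end.

Lemma interleave_index_lshift (i : 'I_d) (a : 'I_s) :
  interleave_index (mxvec_index i (lshift t a)) = lshift (d * t) (mxvec_index i a).
Proof. by rewrite /interleave_index mxvec_indexK (unsplitK (inl _ a)). Qed.

Lemma interleave_index_rshift (i : 'I_d) (a : 'I_t) :
  interleave_index (mxvec_index i (rshift s a)) = rshift (d * s) (mxvec_index i a).
Proof. by rewrite /interleave_index mxvec_indexK (unsplitK (inr _ a)). Qed.

Lemma interleave_index_inj : injective interleave_index.
Proof.
move=> k l; case/mxvec_indexP: k => i a; case/mxvec_indexP: l => j b.
rewrite -(splitK a) -(splitK b).
case: (split a) => a'; case: (split b) => b' /=;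
  rewrite ?interleave_index_lshift ?interleave_index_rshift.
- by move/lshift_inj/(congr1 mxvec_unindex); rewrite !mxvec_indexK => -[-> ->].
- by move/eqP; rewrite eq_lrshift.
- by move/esym/eqP; rewrite eq_lrshift.
- by move/rshift_inj/(congr1 mxvec_unindex); rewrite !mxvec_indexK => -[-> ->].
Qed.

Lemma interleave_index_bij : bijective interleave_index.
Proof. by apply: (inj_card_bij interleave_index_inj); rewrite !card_ord mulnDr. Qed.

Variable K : nmodType.
Variables (U : 'M[K]_(d * s)) (V : 'M[K]_(d * t)).

Definition interleave_mx : 'M[K]_(d * (s + t)) :=
  mxsub interleave_index interleave_index (block_mx U 0 0 V).

Lemma interleave_mx_ll i j a b :
  interleave_mx (mxvec_index i (lshift t a)) (mxvec_index j (lshift t b))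
  = U (mxvec_index i a) (mxvec_index j b).
Proof. by rewrite mxE !interleave_index_lshift block_mxEul. Qed.

Lemma interleave_mx_lr i j a b :
  interleave_mx (mxvec_index i (lshift t a)) (mxvec_index j (rshift s b)) = 0.
Proof.
by rewrite mxE interleave_index_lshift interleave_index_rshift block_mxEur mxE.
Qed.

Lemma interleave_mx_rl i j a b :
  interleave_mx (mxvec_index i (rshift s a)) (mxvec_index j (lshift t b)) = 0.
Proof.
by rewrite mxE interleave_index_lshift interleave_index_rshift block_mxEdl mxE.
Qed.

Lemma interleave_mx_rr i j a b :
  interleave_mx (mxvec_index i (rshift s a)) (mxvec_index j (rshift s b))
  = V (mxvec_index i a) (mxvec_index j b).
Proof. by rewrite mxE !interleave_index_rshift block_mxEdr. Qed.

End Interleave.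

Arguments interleave_index {d s t}.
Arguments interleave_mx {d s t K}.

Section BlockNorms.
Variable R : realType.

Definition block_sqnorm {d s} (U : 'M[R[i]]_(d * s)) : 'M[R[i]]_d :=
  \matrix_(i < d, j < d)
    \sum_(a < s) \sum_(b < s) `|U (mxvec_index i a) (mxvec_index j b)| ^+ 2.

Lemma phi_dsE d s (U : 'M[R[i]]_(d * s)) : phi_ds U = s%:R^-1 *: block_sqnorm U.
Proof. by apply/matrixP => i j; rewrite !mxE. Qed.

Lemma block_sqnorm_interleave d s t (U : 'M[R[i]]_(d * s)) (V : 'M[R[i]]_(d * t)) :
  block_sqnorm (interleave_mx U V) = block_sqnorm U + block_sqnorm V.
Proof.
apply/matrixP => i j; rewrite !mxE big_split_ord /=.
congr (_ + _); apply: eq_bigr => a _; rewrite big_split_ord /=.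
- rewrite [X in _ + X]big1 ?addr0 => [|b _]; last first.
    by rewrite interleave_mx_lr normr0 expr0n.
  by apply: eq_bigr => b _; rewrite interleave_mx_ll.
- rewrite big1 ?add0r => [|b _]; last by rewrite interleave_mx_rl normr0 expr0n.
  by apply: eq_bigr => b _; rewrite interleave_mx_rr.
Qed.

End BlockNorms.

Theorem proposition2p6 (R : realType) (d s t : nat) :
  (2 <= d)%N -> (1 <= s)%N -> (1 <= t)%N ->
  forall B C : 'M[R[i]]_d,
    Uset s B -> Uset t C ->
    Uset (s + t) ((s%:R / (s + t)%:R) *: B + (t%:R / (s + t)%:R) *: C).
Proof.
move=> _ s_gt0 t_gt0 B C [U [hU <-]] [V [hV <-]].
exists (interleave_mx U V); split.
  exact/unitary_mxsub/unitary_block_diag/hV/hU/interleave_index_bij.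
have cancel_weight n : (0 < n)%N ->
    n%:R / (s + t)%:R * n%:R^-1 = (s + t)%:R^-1 :> R[i].
  by move=> n_gt0; rewrite mulrAC divff ?mul1r // pnatr_eq0 -lt0n.
rewrite !phi_dsE block_sqnorm_interleave scalerDr !scalerA.
by rewrite !cancel_weight.
Qed.
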